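(* Let $D$ be an integral domain with quotient field $K$, $\mathcal S$ a multiplicative subset of $D[X]$ ($0\notin\mathcal S$), $\circlearrowleft_{\mathcal S}$ the semistar operation $E\mapsto ED[X]_{\mathcal S}\cap K$ on $D$, $R:=D^{\circlearrowleft_{\mathcal S}}$, and $\iota:D\hookrightarrow R$ the inclusion. Then $R$ is $t$-linked to $(D,\circlearrowleft_{\mathcal S})$, and $\mathcal S\subseteq\mathcal N^{v_R}$ (equivalently, $(\circlearrowleft_{\mathcal S})_\iota$ is a (semi)star operation on $R$). Moreover, $(\circlearrowleft_{\mathcal S})_\iota=w_R$ if and only if the extended saturation $\mathcal S^{\sharp_R}$ of $\mathcal S$ in $R[X]$ equals $\mathcal N^{v_R}$.
   Context: $\overline{\boldsymbol F}(A)$ is the set of nonzero $A$-submodules of $K$ for a domain $A$ with quotient field $K$. A semistar operation on $A$ is a map $\star:\overline{\boldsymbol F}(A)\to\overline{\boldsymbol F}(A)$ with $(xE)^\star=xE^\star$ for $0\ne x\in K$, $E\subseteq F\Rightarrow E^\star\subseteq F^\star$, $E\subseteq E^\star$, $(E^\star)^\star=E^\star$; it is a (semi)star operation if $A^\star=A$. For an overring $R$ of $D$ and a semistar operation $\star$ on $D$, $\star_\iota$ is the semistar operation on $R$ given by $E^{\star_\iota}=E^\star$ for $E\in\overline{\boldsymbol F}(R)\subseteq\overline{\boldsymbol F}(D)$. $v_R$: $E\mapsto(R:(R:E))$; $t_R$ is its finite-type version $E^{t_R}=\bigcup\{F^{v_R}\mid F\subseteq E$ nonzero finitely generated$\}$;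 $w_R$ is the operation $E\mapsto\bigcap\{ER_P\mid P$ a maximal $t_R$-ideal of $R\}$. For $g\in R[X]$, $\mathrm{c}_R(g)$ is the ideal generated by its coefficients, and $\mathcal N^{v_R}=\{g\in R[X]\mid g\neq0,\ \mathrm{c}_R(g)^{v_R}=R\}$. An overring $R$ is $t$-linked to $(D,\star)$ if for each nonzero finitely generated ideal $I$ of $D$, $I^\star=D^\star$ implies $(IR)^{t_R}=R$. For a multiplicative set $\mathcal S\subseteq R[X]$, its extended saturation in $R[X]$ is $R[X]\setminus\bigcup\{P[X]\mid P\in\mathrm{Spec}(R),\ P[X]\cap\mathcal S=\emptyset\}$. *)

From HB Require Import structures.
From mathcomp Require Import all_boot all_order all_algebra.
Set Implicit Arguments. Unset Strict Implicit. Unset Printing Implicit Defensive.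
Import Order.TTheory GRing.Theory Num.Theory.
Local Open Scope ring_scope.

(* Subsets of a field K are predicates K -> Prop. The domain D is modelled as a
   subring of a field K whose quotient field is K; overrings are subrings of K
   containing D.  Nonzero A-submodules of K play the role of F-bar(A). *)

Section Defs.
Variable K : fieldType.

Definition subset (E F : K -> Prop) := forall x, E x -> F x.
Definition seteq (E F : K -> Prop) := forall x, E x <-> F x.

Definition is_subring (A : K -> Prop) :=
  A 1 /\ (forall x y, A x -> A y -> A (x - y)) /\ (forall x y, A x -> A y -> A (x * y)).

Definition is_quotient_field (A : K -> Prop) :=
  forall x, exists a b, A a /\ A b /\ b != 0 /\ x = a / b.

Definition submodule (A E : K -> Prop) :=
  E 0 /\ (forall x y, E x -> E y -> E (x + y)) /\ (forall a x, A a -> E x -> E (a * x)).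
Definition nz_submodule (A E : K -> Prop) :=
  submodule A E /\ exists x, E x /\ x != 0.

Definition scale (x : K) (E : K -> Prop) : K -> Prop := fun y => exists e, E e /\ y = x * e.

Definition is_semistar (A : K -> Prop) (star : (K -> Prop) -> (K -> Prop)) :=
  (forall E, nz_submodule A E -> nz_submodule A (star E)) /\
  (forall x E, x != 0 -> nz_submodule A E -> seteq (star (scale x E)) (scale x (star E))) /\
  (forall E F, nz_submodule A E -> nz_submodule A F -> subset E F -> subset (star E) (star F)) /\
  (forall E, nz_submodule A E -> subset E (star E)) /\
  (forall E, nz_submodule A E -> seteq (star (star E)) (star E)).

Definition span (A : K -> Prop) (l : seq K) : K -> Prop :=
  fun x => exists f : nat -> K, (forall i, A (f i)) /\ x = \sum_(i < size l) f i * l`_i.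

Definition colon (A E : K -> Prop) : K -> Prop := fun x => forall e, E e -> A (x * e).
Definition vop (A E : K -> Prop) : K -> Prop := colon A (colon A E).
Definition top (A E : K -> Prop) : K -> Prop :=
  fun x => exists l : seq K, (forall y, y \in l -> E y) /\ has (fun y => y != 0) l /\
                             vop A (span A l) x.

Definition is_ideal (A I : K -> Prop) := submodule A I /\ subset I A.
Definition t_ideal (A I : K -> Prop) :=
  is_ideal A I /\ (exists x, I x /\ x != 0) /\ seteq (top A I) I.
Definition max_t_ideal (A P : K -> Prop) :=
  t_ideal A P /\ ~ P 1 /\
  (forall Q, t_ideal A Q -> ~ Q 1 -> subset P Q -> seteq Q P).

(* E^{w_A} = intersection of E A_P over maximal t-ideals P *)
Definition wop (A E : K -> Prop) : K -> Prop :=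
  fun x => forall P, max_t_ideal A P -> exists s, A s /\ ~ P s /\ E (s * x).

Definition prime_ideal (A P : K -> Prop) :=
  is_ideal A P /\ ~ P 1 /\ (forall a b, A a -> A b -> P (a * b) -> P a \/ P b).

Definition polyOverP (A : K -> Prop) (g : {poly K}) := forall i, A g`_i.

Definition mult_subset (D : K -> Prop) (S : {poly K} -> Prop) :=
  (forall s, S s -> polyOverP D s) /\ S 1 /\ ~ S 0 /\
  (forall s t, S s -> S t -> S (s * t)).

(* E |-> E D[X]_S \cap K : x = f/s with f in E D[X] = E[X], s in S,
   i.e. x * s has all coefficients in E *)
Definition circS (S : {poly K} -> Prop) (E : K -> Prop) : K -> Prop :=
  fun x => exists s, S s /\ forall i, E (x * s`_i).

Definition Nv (R : K -> Prop) (g : {poly K}) :=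
  polyOverP R g /\ g != 0 /\ seteq (vop R (span R g)) R.

Definition sharp (R : K -> Prop) (S : {poly K} -> Prop) (g : {poly K}) :=
  polyOverP R g /\
  forall P, prime_ideal R P -> (forall s, S s -> ~ polyOverP P s) -> ~ polyOverP P g.

Definition t_linked (D : K -> Prop) (star : (K -> Prop) -> (K -> Prop)) (R : K -> Prop) :=
  forall l : seq K, (forall y, y \in l -> D y) -> has (fun y => y != 0) l ->
    seteq (star (span D l)) (star D) -> seteq (top R (span R l)) R.

End Defs.

From Pilot Require Import Defs.
From HB Require Import structures.
From mathcomp Require Import all_boot all_order all_algebra ring.
From mathcomp Require Import boolp.
From mathcomp Require classical_sets.
From Stdlib Require Import Classical.
Set Implicit Arguments. Unset Strict Implicit. Unset Printing Implicit Defensive.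
Import GRing.Theory Defs.
Local Open Scope ring_scope.

(* Every [s] in [S] is [v]-invertible over [R]: if [z c(s)] lies in [R] then so does
   [z s], hence [z] lies in [R^circ = R].  This gives [S ⊆ N^{v_R}], and the same
   argument applied to an [s] with [c(s) ⊆ I D[X]] gives t-linkedness.  A proper t-ideal
   contains the content of no member of [N^{v_R}], so each maximal t-ideal misses a
   coefficient of each [s] in [S], whence [E^circ ⊆ E^w].
   For the equivalence, [x] lies in [E^circ] iff the conductor [(E :_R x)] contains the
   content of some [s] in [S], i.e. (an ideal maximal among those containing no such
   content being prime) iff it lies in no prime [P] with [P[X] ∩ S = ∅]; and [x] lies in
   [E^w] iff the conductor lies in no maximal t-ideal.  Maximal t-ideals are prime, and
   [N^{v_R} ⊆ S^♯] says precisely that every nonzero prime [P] with [P[X] ∩ S = ∅] has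
   proper t-closure, hence lies in a maximal t-ideal; the conductor is nonzero because [K]
   is the quotient field of [D].  The inclusion [S^♯ ⊆ N^{v_R}] holds in general. *)

Lemma Zorn_above (T : Type) (P : (T -> Prop) -> Prop) (X0 : T -> Prop) :
  P X0 ->
  (forall F : (T -> Prop) -> Prop, (forall X, F X -> P X /\ (forall x, X0 x -> X x)) ->
     (exists X, F X) ->
     (forall X Y, F X -> F Y -> (forall x, X x -> Y x) \/ (forall x, Y x -> X x)) ->
     P (fun x => exists X, F X /\ X x)) ->
  exists M, P M /\ (forall x, X0 x -> M x) /\
    (forall B, P B -> (forall x, M x -> B x) -> forall x, B x -> M x).
Proof.
move=> PX0 chainP.
pose Q Y := P Y /\ forall x, X0 x -> Y x.
pose le (X Y : {X | Q X}) := `[< forall x, sval X x -> sval Y x >].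
have u0 : {X | Q X} by exists X0.
have [|||[M [PM X0M]] Mmax] := @classical_sets.ZL_preorder _ u0 le.
- by move=> X; apply/asboolP.
- by move=> X Y Z /asboolP XY /asboolP YZ; apply/asboolP => x /XY /YZ.
- move=> C Ctot; have [[X CX]|noC] := classic (exists X, C X); last first.
    by exists u0 => X CX; case: noC; exists X.
  pose F Y := exists X, C X /\ sval X = Y.
  have FQ Y : F Y -> Q Y by case=> -[Z QZ] [_ <-].
  have PF : P (fun x => exists Y, F Y /\ Y x).
    apply: chainP FQ _ _; first by exists (sval X), X.
    move=> _ _ [Y [CY <-]] [Z [CZ <-]].
    by case: (Ctot Y Z CY CZ) => /asboolP; [left|right].
  have X0F x : X0 x -> exists Y, F Y /\ Y x.
    by move=> X0x; exists (sval X); split; [exists X | case: (svalP X) => _; apply].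
  exists (exist Q _ (conj PF X0F)) => Y CY; apply/asboolP => x Yx /=.
  by exists (sval Y); split=> //; exists Y.
exists M; split=> //; split=> // B PB MB.
have X0B x : X0 x -> B x by move/X0M; apply: MB.
by have /asboolP := Mmax (exist Q B (conj PB X0B)) (asboolT MB).
Qed.

Section Polynomials.
Variable K : fieldType.

Lemma coefM_closed (C : K -> Prop) (c : K) (p q : {poly K}) k :
  C 0 -> (forall x y, C x -> C y -> C (x + y)) ->
  (forall i j, C (c * (p`_i * q`_j))) -> C (c * (p * q)`_k).
Proof.
move=> C0 CD H; rewrite coefM mulr_sumr.
by apply: (big_ind C) => // i _; apply: H.
Qed.

Lemma polyOverP_mem (P : K -> Prop) (p : {poly K}) y :
  polyOverP P p -> y \in (p : seq K) -> P y.
Proof. by move=> Pp yp; rewrite -(nth_index 0 yp); apply: Pp. Qed.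

Lemma pred_nth (P : K -> Prop) (L : seq K) k :
  P 0 -> (forall y, y \in L -> P y) -> P L`_k.
Proof.
move=> P0 LP; case: (ltnP k (size L)) => lt; first by apply: LP; apply: mem_nth.
by rewrite nth_default.
Qed.

Lemma poly_has_nz (p : {poly K}) : p != 0 -> has (fun y => y != 0) p.
Proof.
move=> pnz; apply/hasP; exists (lead_coef p); last by rewrite lead_coef_eq0.
by rewrite lead_coefE mem_nth // prednK // lt0n size_poly_eq0.
Qed.

Lemma not_polyOverP (P : K -> Prop) (p : {poly K}) :
  ~ polyOverP P p -> exists i, ~ P p`_i.
Proof.
move=> nPp; apply: NNPP => allP; apply: nPp => i.
by apply: NNPP => nPi; apply: allP; exists i.
Qed.

End Polynomials.

Section SubringTheory.
Variables (K : fieldType) (A : K -> Prop).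
Hypothesis hA : is_subring A.

Lemma subring1 : A 1. Proof. by case: hA. Qed.
Lemma subringB x y : A x -> A y -> A (x - y). Proof. by case: hA => _ [+ _]; apply. Qed.
Lemma subringM x y : A x -> A y -> A (x * y). Proof. by case: hA => _ [_]; apply. Qed.
Lemma subring0 : A 0. Proof. by rewrite -(subrr 1); apply: subringB; apply: subring1. Qed.
Lemma subringN x : A x -> A (- x).
Proof. by rewrite -sub0r; apply: subringB; apply: subring0. Qed.
Lemma subringD x y : A x -> A y -> A (x + y).
Proof. by move=> Ax Ay; rewrite -(opprK y); apply: subringB => //; apply: subringN. Qed.

Lemma subring_submodule : submodule A A.
Proof. by split; [exact: subring0 | split; [exact: subringD | exact: subringM]]. Qed.

Lemma submodule_restrict (B E : K -> Prop) :
  subset B A -> submodule A E -> submodule B E.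
Proof. by move=> BA [E0 [ED EM]]; split=> //; split=> // b x /BA; apply: EM. Qed.

Lemma prime_ideal0 : prime_ideal A (fun x => x = 0).
Proof.
split; first split.
- split=> //; split; [by move=> x y -> ->; rewrite addr0 | by move=> a x _ ->; rewrite mulr0].
- by move=> x ->; exact: subring0.
split; first by move/eqP; rewrite oner_eq0.
by move=> a b _ _ /eqP; rewrite mulf_eq0 => /orP[/eqP|/eqP]; [left|right].
Qed.

Lemma ideal_adjoin (I : K -> Prop) a : is_ideal A I -> A a ->
  is_ideal A (fun x => exists m r, I m /\ A r /\ x = m + r * a).
Proof.
move=> [[I0 [ID IM]] IA] Aa.
split; last first.
  by move=> x [m [r [Im [Ar ->]]]]; apply: subringD; [apply: IA | apply: subringM].
split; first by exists 0, 0; rewrite mul0r addr0; split=> //; split=> //; exact: subring0.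
split.
  move=> x y [m [r [Im [Ar ->]]]] [m' [r' [Im' [Ar' ->]]]].
  exists (m + m'), (r + r'); split; first exact: ID.
  by split; [exact: subringD | rewrite mulrDl addrACA].
move=> c x Ac [m [r [Im [Ar ->]]]]; exists (c * m), (c * r).
split; first exact: IM.
by split; [exact: subringM | rewrite mulrDr mulrA].
Qed.

Lemma chain_list_bound (F : (K -> Prop) -> Prop) (L : seq K) :
  (exists X, F X) ->
  (forall X Y, F X -> F Y -> subset X Y \/ subset Y X) ->
  (forall y, y \in L -> exists X, F X /\ X y) ->
  exists X, F X /\ forall y, y \in L -> X y.
Proof.
move=> [X0 FX0] tot; elim: L => [|a L IH] H; first by exists X0.
have [X [FX HX]] : exists X, F X /\ forall y, y \in L -> X y.
  by apply: IH => y yL; apply: H; rewrite inE yL orbT.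
have [Y [FY Ya]] := H a (mem_head _ _).
case: (tot X Y FX FY) => XY.
  by exists Y; split=> // y; rewrite inE => /orP[/eqP ->|/HX /XY].
by exists X; split=> // y; rewrite inE => /orP[/eqP ->|/HX //]; apply: XY.
Qed.

Lemma chain_union_ideal (F : (K -> Prop) -> Prop) :
  (forall X, F X -> is_ideal A X) -> (exists X, F X) ->
  (forall X Y, F X -> F Y -> subset X Y \/ subset Y X) ->
  is_ideal A (fun x => exists X, F X /\ X x).
Proof.
move=> iF [X FX] tot.
split; last by move=> x [Y [FY Yx]]; case: (iF Y FY) => _; apply.
split; first by exists X; split=> //; case: (iF X FX) => [[]].
split; last first.
  move=> a x Aa [Y [FY Yx]]; exists Y; split=> //.
  by case: (iF Y FY) => [[_ [_ YM]] _]; apply: YM.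
move=> x y Hx Hy.
have [Y [FY Yxy]] : exists Y, F Y /\ forall z, z \in [:: x; y] -> Y z.
  apply: chain_list_bound tot _; first by exists X.
  by move=> z; rewrite !inE => /orP[] /eqP ->.
exists Y; split=> //; case: (iF Y FY) => [[_ [YD _]] _].
by apply: YD; apply: Yxy; rewrite !inE eqxx ?orbT.
Qed.

Lemma span_submodule (l : seq K) : submodule A (span A l).
Proof.
split.
  exists (fun _ => 0); split; first by move=> _; exact: subring0.
  by rewrite big1 // => i; rewrite mul0r.
split.
  move=> x y [f [Af ->]] [g [Ag ->]]; exists (fun i => f i + g i); split.
    by move=> i; apply: subringD.
  by rewrite -big_split /=; apply: eq_bigr => i _; rewrite mulrDl.
move=> a x Aa [f [Af ->]]; exists (fun i => a * f i); split.
  by move=> i; apply: subringM.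
by rewrite mulr_sumr; apply: eq_bigr => i _; rewrite mulrA.
Qed.

Lemma span_min (B E : K -> Prop) (l : seq K) x : submodule B E ->
  (forall y, y \in l -> E y) -> span B l x -> E x.
Proof.
move=> [E0 [ED EM]] lE [f [Bf ->]].
by apply: (big_ind E) => // i _; apply: EM => //; apply: lE; exact: mem_nth.
Qed.

Lemma span_nth (l : seq K) j : span A l l`_j.
Proof.
exists (fun i => (i == j)%:R); split.
  by move=> i; case: (i == j); [exact: subring1 | exact: subring0].
case: (ltnP j (size l)) => lt.
  rewrite (bigD1 (Ordinal lt)) //= eqxx mul1r big1 ?addr0 // => i.
  by rewrite -val_eqE /= => /negbTE ->; rewrite mul0r.
rewrite nth_default // big1 // => i _.
have /negbTE -> : (i != j :> nat) by rewrite neq_ltn (leq_trans (ltn_ord i) lt).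
by rewrite mul0r.
Qed.

Lemma span_mem (l : seq K) y : y \in l -> span A l y.
Proof. by move=> yl; rewrite -(nth_index 0 yl); apply: span_nth. Qed.

Lemma span_subset (l l' : seq K) : {subset l <= l'} -> subset (span A l) (span A l').
Proof. by move=> ll' x; apply: span_min (span_submodule l') _ => y /ll'; apply: span_mem. Qed.

Lemma vop_mono (E F : K -> Prop) : subset E F -> subset (vop A E) (vop A F).
Proof. by move=> EF x Hx z Hz; apply: Hx => e /EF; apply: Hz. Qed.

Lemma vop_ge (E : K -> Prop) : subset E (vop A E).
Proof. by move=> y Ey z Hz; rewrite mulrC; apply: Hz. Qed.

Lemma vop_idem (E : K -> Prop) : subset (vop A (vop A E)) (vop A E).
Proof. by move=> x Hx z Hz; apply: Hx => e He; rewrite mulrC; exact: He. Qed.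

Lemma vop_submodule (E : K -> Prop) : submodule A (vop A E).
Proof.
split; first by move=> z _; rewrite mul0r; exact: subring0.
split.
  by move=> x y Hx Hy z Hz; rewrite mulrDl; apply: subringD; [apply: Hx|apply: Hy].
by move=> a x Aa Hx z Hz; rewrite -mulrA; apply: subringM => //; apply: Hx.
Qed.

Lemma vop_span_sub (l : seq K) : (forall y, y \in l -> A y) -> subset (vop A (span A l)) A.
Proof.
move=> lA x Hx; rewrite -(mulr1 x); apply: Hx => e; rewrite mul1r.
exact: span_min subring_submodule lA.
Qed.

Lemma vop_span_eq (l : seq K) : (forall y, y \in l -> A y) -> vop A (span A l) 1 ->
  seteq (vop A (span A l)) A.
Proof.
move=> lA H1 x; split; first exact: vop_span_sub.
by move=> Ax; rewrite -(mulr1 x); case: (vop_submodule (span A l)) => _ [_]; apply.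
Qed.

Lemma vop_span_scale (l : seq K) (b y : K) : vop A (span A l) y ->
  vop A (span A (map (fun u => b * u) l)) (b * y).
Proof.
move=> Hy z Hz; rewrite [b * y]mulrC -mulrA [b * z]mulrC; apply: Hy => e He.
rewrite -mulrA; apply: Hz.
pose bE e := span A (map (fun u => b * u) l) (b * e).
suff : bE e by [].
apply: span_min He.
  have [S0 [SD SM]] := span_submodule (map (fun u => b * u) l).
  split; first by rewrite /bE mulr0.
  split; first by move=> u v Hu Hv; rewrite /bE mulrDr; apply: SD.
  by move=> a u Aa Hu; rewrite /bE mulrCA; apply: SM.
by move=> u ul; apply: span_mem; apply: map_f.
Qed.

Lemma top_ge (I : K -> Prop) : (exists x0, I x0 /\ x0 != 0) -> subset I (top A I).
Proof.
move=> [x0 [Ix0 nz]] x Ix; exists [:: x; x0]; split.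
  by move=> y; rewrite !inE => /orP[] /eqP ->.
split; first by rewrite /= nz orbT.
by apply: vop_ge; apply: span_mem; rewrite inE eqxx.
Qed.

Lemma top_common_list (I : K -> Prop) (L : seq K) : (forall y, y \in L -> top A I y) ->
  exists L', (forall y, y \in L' -> I y) /\ forall y, y \in L -> vop A (span A L') y.
Proof.
elim: L => [|a L IH] H; first by exists [::].
have [L' [L'I HL']] : exists L', (forall y, y \in L' -> I y) /\
    forall y, y \in L -> vop A (span A L') y.
  by apply: IH => y yL; apply: H; rewrite inE yL orbT.
have [La [LaI [_ Ha]]] := H a (mem_head _ _).
exists (La ++ L'); split.
  by move=> y; rewrite mem_cat => /orP[]; [apply: LaI|apply: L'I].
move=> y; rewrite inE => /orP[/eqP ->|yL].
  by move: Ha; apply: vop_mono; apply: span_subset => z; rewrite mem_cat => ->.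
by move: (HL' y yL); apply: vop_mono; apply: span_subset => z; rewrite mem_cat orbC => ->.
Qed.

Lemma top_idem (I : K -> Prop) : subset (top A (top A I)) (top A I).
Proof.
move=> x [L [LI [hL Hx]]].
have [L' [L'I HL']] := top_common_list LI.
have [y0 y0L nz] := hasP hL.
have [L0 [L0I [hL0 _]]] := LI y0 y0L.
exists (L0 ++ L'); split.
  by move=> y; rewrite mem_cat => /orP[]; [apply: L0I|apply: L'I].
split; first by rewrite has_cat hL0.
apply: vop_idem; move: Hx; apply: vop_mono => e.
apply: span_min (vop_submodule _) _ => y yL.
by move: (HL' y yL); apply: vop_mono; apply: span_subset => z; rewrite mem_cat orbC => ->.
Qed.

Lemma top_ideal (I : K -> Prop) : is_ideal A I -> (exists x0, I x0 /\ x0 != 0) ->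
  is_ideal A (top A I).
Proof.
move=> [[I0 _] IA] nzI.
split; last first.
  by move=> x [L [LI [_ Hx]]]; apply: vop_span_sub Hx => y /LI; exact: IA.
split; first exact: top_ge nzI _ I0.
split.
  move=> x y [L1 [L1I [h1 H1]]] [L2 [L2I [h2 H2]]]; exists (L1 ++ L2); split.
    by move=> z; rewrite mem_cat => /orP[]; [apply: L1I|apply: L2I].
  split; first by rewrite has_cat h1.
  case: (vop_submodule (span A (L1 ++ L2))) => _ [VD _]; apply: VD.
    by move: H1; apply: vop_mono; apply: span_subset => z; rewrite mem_cat => ->.
  by move: H2; apply: vop_mono; apply: span_subset => z; rewrite mem_cat orbC => ->.
move=> a x Aa [L [LI [h H]]]; exists L; split=> //; split=> //.
by case: (vop_submodule (span A L)) => _ [_]; apply.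
Qed.

Lemma t_ideal_top (I : K -> Prop) : is_ideal A I -> (exists x0, I x0 /\ x0 != 0) ->
  t_ideal A (top A I).
Proof.
move=> iI nzI; have nzT : exists x0, top A I x0 /\ x0 != 0.
  by have [x0 [Ix0 nz]] := nzI; exists x0; split=> //; exact: top_ge nzI x0 Ix0.
split; first exact: top_ideal.
by split=> // x; split; [exact: top_idem | exact: top_ge nzT x].
Qed.

Lemma max_t_ideal_exists (I : K -> Prop) : t_ideal A I -> ~ I 1 ->
  exists M, max_t_ideal A M /\ subset I M.
Proof.
move=> tI nI1; have [_ [[x0 [Ix0 nz]] _]] := tI.
have [|M [[tM nM1] [IM Mmax]]] :=
  @Zorn_above K (fun Q => t_ideal A Q /\ ~ Q 1) I (conj tI nI1).
  move=> F FP [X FX] tot.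
  have tF Y : F Y -> t_ideal A Y by case/FP => -[].
  have iU := chain_union_ideal (fun Y FY => (tF Y FY).1) (ex_intro _ X FX) tot.
  have U0 : exists x0, (exists X, F X /\ X x0) /\ x0 != 0.
    by exists x0; split=> //; exists X; split=> //; case: (FP X FX) => _; apply.
  split; last by move=> [Y [FY Y1]]; case: (FP Y FY) => -[_ nY1] _.
  split=> //; split=> // x; split; last exact: top_ge.
  move=> [L [LU Hx]].
  have [Y [FY LY]] := chain_list_bound (ex_intro _ X FX) tot LU.
  exists Y; split=> //; case: (tF Y FY) => _ [_ /(_ x) [tY _]].
  by apply: tY; exists L.
exists M; split=> //; split=> //; split=> // Q tQ nQ1 MQ x.
by split; [apply: Mmax (conj tQ nQ1) MQ x | apply: MQ].
Qed.

(* If [a, b] lie outside [M] while [ab] lies in it, maximality forces [(M + Aa)_t = A];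
   multiplying the witnessing list by [b] lands in [M], so [b] lies in [M_t = M]. *)
Lemma max_t_ideal_prime (M : K -> Prop) : max_t_ideal A M -> prime_ideal A M.
Proof.
move=> [[iM [nzM tM]] [nM1 Mmax]].
split=> //; split=> // a b Aa Ab Mab.
apply: NNPP => /not_or_and [na nb].
have [[M0 [MD MM]] _] := iM.
pose J := fun x => exists m r, M m /\ A r /\ x = m + r * a.
have iJ : is_ideal A J := ideal_adjoin iM Aa.
have MJ : subset M J.
  by move=> x Mx; exists x, 0; rewrite mul0r addr0; split=> //; split=> //; exact: subring0.
have nzJ : exists x0, J x0 /\ x0 != 0.
  by case: nzM => x0 [Mx0 nz]; exists x0; split=> //; apply: MJ.
have topJ1 : top A J 1.
  apply: NNPP => n1.
  have MtopJ : subset M (top A J) by move=> x /MJ; apply: top_ge.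
  apply: na; case: (Mmax _ (t_ideal_top iJ nzJ) n1 MtopJ a) => + _; apply.
  have Ja : J a.
    by rewrite /J; exists 0, 1; rewrite mul1r add0r; split=> //; split=> //; exact: subring1.
  exact: top_ge nzJ a Ja.
case: topJ1 => L [LJ [hL H1]].
have Hb := @vop_span_scale L b 1 H1; rewrite mulr1 in Hb.
apply: (nb); case: (tM b) => + _; apply.
exists (map (fun u => b * u) L); split.
  move=> y /mapP [u uL ->]; have [m [r [Mm [Ar ->]]]] := LJ u uL.
  rewrite mulrDr mulrCA; apply: MD; first exact: MM.
  by rewrite [b * a]mulrC; apply: MM.
split=> //.
have bnz : b != 0 by apply/eqP => b0; apply: nb; rewrite b0.
have [u uL unz] := hasP hL.
by apply/hasP; exists (b * u); [apply: map_f | rewrite mulf_neq0].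
Qed.

Lemma t_ideal_Nv (M : K -> Prop) (g : {poly K}) :
  t_ideal A M -> ~ M 1 -> Nv A g -> ~ polyOverP M g.
Proof.
move=> [_ [_ tM]] nM1 [_ [gnz vg]] Mg; apply: nM1; case: (tM 1) => + _; apply.
exists g; split; first by move=> y; apply: polyOverP_mem.
by split; [exact: poly_has_nz | case: (vg 1) => _; apply; exact: subring1].
Qed.

Lemma Nv_Poly (L : seq K) : (forall y, y \in L -> A y) -> has (fun y => y != 0) L ->
  vop A (span A L) 1 -> Nv A (Poly L).
Proof.
move=> LA hL H1.
have PolyA : polyOverP A (Poly L).
  by move=> i; rewrite coef_Poly; apply: pred_nth => //; exact: subring0.
split=> //; split.
  apply/eqP => L0; have [y yL ynz] := hasP hL; move: ynz.
  by rewrite -(nth_index 0 yL) -coef_Poly L0 coef0 eqxx.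
apply: vop_span_eq; first by move=> y; apply: polyOverP_mem.
move: H1; apply: vop_mono => x; apply: span_min (span_submodule _) _ => y yL.
by rewrite -(nth_index 0 yL) -coef_Poly; exact: span_nth.
Qed.

Definition colon_elt (E : K -> Prop) (x : K) : K -> Prop := fun r => A r /\ E (r * x).

Lemma colon_elt_ideal (E : K -> Prop) x : submodule A E -> is_ideal A (colon_elt E x).
Proof.
move=> [E0 [ED EM]]; split; last by move=> r [].
split; first by split; [exact: subring0 | rewrite mul0r].
split.
  move=> r r' [Ar Er] [Ar' Er']; split; [exact: subringD | rewrite mulrDl; exact: ED].
by move=> a r Aa [Ar Er]; split; [exact: subringM | rewrite -mulrA; exact: EM].
Qed.

Lemma colon_elt_nz (D E : K -> Prop) x : is_quotient_field D -> subset D A ->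
  nz_submodule A E -> exists a, colon_elt E x a /\ a != 0.
Proof.
move=> hQ DA [[E0 [_ EM]] [e [Ee enz]]].
have [->|xnz] := eqVneq x 0.
  by exists 1; split; [split; [exact: subring1 | rewrite mulr0] | exact: oner_neq0].
have [a [b [Da [Db [bnz eab]]]]] := hQ (e / x).
have anz : a != 0.
  apply/eqP => a0; move: eab; rewrite a0 mul0r => /eqP.
  by rewrite mulf_eq0 invr_eq0 (negbTE enz) (negbTE xnz).
exists a; split=> //; split; first exact: DA.
have -> : a * x = b * e by rewrite -(divfK bnz a) -eab mulrAC divfK // mulrC.
by apply: EM => //; exact: DA.
Qed.

End SubringTheory.

Definition avoids (K : fieldType) (S : {poly K} -> Prop) (P : K -> Prop) :=
  forall s, S s -> ~ polyOverP P s.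

Section AvoidingIdeals.
Variables (K : fieldType) (A : K -> Prop) (S : {poly K} -> Prop).
Hypotheses (hA : is_subring A) (S1 : S 1) (SM : forall s t, S s -> S t -> S (s * t)).

(* For [a, b] outside [P], maximality gives [s1, s2] in [S] with coefficients in
   [P + Aa] and [P + Ab]; the coefficients of [s1 s2] then lie in [P + Aab = P]. *)
Lemma avoids_max_prime (P : K -> Prop) : is_ideal A P -> avoids S P ->
  (forall Q, is_ideal A Q -> avoids S Q -> subset P Q -> subset Q P) -> prime_ideal A P.
Proof.
move=> iP avP Pmax; have [[P0 [PD PM]] PA] := iP.
split=> //; split.
  by move=> P1; apply: (avP 1 S1) => i; rewrite coef1; case: (i == 0%N).
move=> a b Aa Ab Pab; apply: NNPP => /not_or_and [na nb].
have adj c : A c -> ~ P c -> exists s, S s /\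
    polyOverP (fun x => exists m r, P m /\ A r /\ x = m + r * c) s.
  move=> Ac nc; apply: NNPP => nS; apply: (nc); apply: (Pmax _ (ideal_adjoin hA iP Ac)).
  - by move=> s Ss Hs; apply: nS; exists s.
  - move=> x Px; exists x, 0; rewrite mul0r addr0; split=> //; split=> //.
    exact: (subring0 hA).
  - by exists 0, 1; rewrite mul1r add0r; split=> //; split=> //; exact: (subring1 hA).
have [s1 [Ss1 H1]] := adj a Aa na.
have [s2 [Ss2 H2]] := adj b Ab nb.
apply: (avP _ (SM Ss1 Ss2)) => k; rewrite -[_`_k]mul1r; apply: coefM_closed => //.
move=> i j; rewrite mul1r.
have [m [r [Pm [Ar ->]]]] := H1 i; have [m' [r' [Pm' [Ar' ->]]]] := H2 j.
have -> : (m + r * a) * (m' + r' * b) =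
   (m' + r' * b) * m + (r * a) * m' + (r * r') * (a * b) by ring.
have Am' : A (m' + r' * b) := subringD hA (PA m' Pm') (subringM hA Ar' Ab).
apply: (PD _ _ (PD _ _ (PM _ _ Am' Pm) _)).
- exact: PM (subringM hA Ar Aa) Pm'.
- exact: PM (subringM hA Ar Ar') Pab.
Qed.

Lemma avoids_ideal_content (J : K -> Prop) : is_ideal A J ->
  (forall P, prime_ideal A P -> avoids S P -> ~ subset J P) ->
  exists s, S s /\ polyOverP J s.
Proof.
move=> iJ HJ; apply: NNPP => noS.
have avJ : avoids S J by move=> s Ss Js; apply: noS; exists s.
have [|P [[iP avP] [JP Pmax]]] :=
  @Zorn_above K (fun Q => is_ideal A Q /\ avoids S Q) J (conj iJ avJ).
  move=> F FP [X FX] tot; split.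
    by apply: chain_union_ideal => //; [move=> Y /FP [[]] | exists X].
  move=> s Ss Us.
  have [Y [FY sY]] := chain_list_bound (ex_intro _ X FX) tot (fun y => polyOverP_mem Us).
  case: (FP Y FY) => [[[[Y0 _] _] avY] _]; apply: (avY s Ss) => i.
  exact: pred_nth.
apply: (HJ P _ avP JP); apply: avoids_max_prime => // Q iQ avQ PQ.
exact: Pmax (conj iQ avQ) PQ.
Qed.

End AvoidingIdeals.

Section MultSubset.
Variables (K : fieldType) (D : K -> Prop) (S : {poly K} -> Prop).
Hypothesis hS : mult_subset D S.

Lemma mult_subset_over s : S s -> polyOverP D s. Proof. by case: hS => + _; apply. Qed.
Lemma mult_subset1 : S 1. Proof. by case: hS => _ []. Qed.
Lemma mult_subset_neq0 : ~ S 0. Proof. by case: hS => _ [_ []]. Qed.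
Lemma mult_subsetM s t : S s -> S t -> S (s * t). Proof. by case: hS => _ [_ [_]]; apply. Qed.

Lemma mult_subset_common (n : nat) (Q : nat -> {poly K} -> Prop) :
  (forall i t u, Q i t -> S u -> Q i (t * u)) ->
  (forall i, (i < n)%N -> exists t, S t /\ Q i t) ->
  exists t, S t /\ forall i, (i < n)%N -> Q i t.
Proof.
move=> Qup; elim: n => [|n IH] H; first by exists 1; split=> //; exact: mult_subset1.
have [t [St Qt]] : exists t, S t /\ forall i, (i < n)%N -> Q i t.
  by apply: IH => i lt; apply: H; apply: ltnW.
have [u [Su Qu]] := H n (ltnSn n).
exists (t * u); split; first exact: mult_subsetM.
move=> i; rewrite ltnS leq_eqVlt => /orP[/eqP ->|lt]; last by apply: Qup => //; apply: Qt.
by rewrite mulrC; apply: Qup.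
Qed.

Lemma submodule_coefMr (E : K -> Prop) x (s t : {poly K}) : submodule D E ->
  polyOverP D t -> (forall i, E (x * s`_i)) -> forall i, E (x * (s * t)`_i).
Proof.
move=> [E0 [ED EM]] Dt Hs k; apply: coefM_closed => // i j.
by rewrite mulrA mulrC; apply: EM.
Qed.

Lemma circS_ge (E : K -> Prop) : E 0 -> subset E (circS S E).
Proof.
move=> E0 x Ex; exists 1; split; first exact: mult_subset1.
by move=> i; rewrite coef1; case: (i == 0%N); rewrite ?mulr1 ?mulr0.
Qed.

Lemma circS_mono (E F : K -> Prop) : subset E F -> subset (circS S E) (circS S F).
Proof. by move=> EF x [s [Ss H]]; exists s; split=> // i; apply: EF. Qed.

Lemma circS_add (E : K -> Prop) x y : submodule D E ->
  circS S E x -> circS S E y -> circS S E (x + y).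
Proof.
move=> hE [s [Ss Hs]] [t [St Ht]]; exists (s * t); split; first exact: mult_subsetM.
move=> i; rewrite mulrDl; case: (hE) => _ [ED _]; apply: ED.
  by apply: submodule_coefMr => //; apply: mult_subset_over.
by rewrite [s * t]mulrC; apply: submodule_coefMr => //; apply: mult_subset_over.
Qed.

Lemma circS_mul (B E : K -> Prop) a x : submodule D E ->
  (forall b e, B b -> E e -> E (b * e)) ->
  circS S B a -> circS S E x -> circS S E (a * x).
Proof.
move=> [E0 [ED _]] BE [u [Su Hu]] [s [Ss Hs]]; exists (u * s); split.
  exact: mult_subsetM.
by move=> k; apply: coefM_closed => // i j; rewrite mulrACA; apply: BE.
Qed.

(* Clearing the finitely many denominators [t_i] of the coefficients [x s_i] by a
   common multiple in [S]. *)
Lemma circS_idem (E : K -> Prop) : submodule D E ->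
  subset (circS S (circS S E)) (circS S E).
Proof.
move=> hE x [s [Ss Hs]]; have [E0 [ED EM]] := hE.
have [t [St Ht]] : exists t, S t /\ forall i, (i < size s)%N ->
    forall j, E (x * s`_i * t`_j).
  apply: mult_subset_common.
    by move=> i t u Ht Su; apply: submodule_coefMr => //; exact: mult_subset_over.
  by move=> i _; case: (Hs i) => t [St Ht]; exists t.
exists (s * t); split; first exact: mult_subsetM.
move=> k; apply: coefM_closed => // i j; rewrite mulrA.
by case: (ltnP i (size s)) => lt; [exact: Ht | rewrite nth_default // mulr0 mul0r].
Qed.

Lemma circS_submodule (E : K -> Prop) : submodule D E ->
  submodule (circS S D) (circS S E).
Proof.
move=> hE; have [E0 [ED EM]] := hE.
split; first exact: circS_ge.
by split; [move=> x y; exact: circS_add | move=> a x; exact: circS_mul].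
Qed.

Hypothesis hD : is_subring D.

Lemma circS_subring : is_subring (circS S D).
Proof.
have [R0 [RD RM]] := circS_submodule (subring_submodule hD).
have R1 : circS S D 1 by apply: circS_ge (subring0 hD) _ (subring1 hD).
split=> //; split=> // x y Rx Ry; apply: RD => //.
rewrite -mulN1r; apply: RM Ry; apply: circS_ge (subring0 hD) _ _.
exact: (subringN hD (subring1 hD)).
Qed.

Lemma circS_scale (E : K -> Prop) x : x != 0 ->
  seteq (circS S (scale x E)) (scale x (circS S E)).
Proof.
move=> xnz y; split.
  move=> [s [Ss Hs]]; exists (y / x); split; last by rewrite mulrC divfK.
  exists s; split=> // i; have [u [Eu Hu]] := Hs i.
  by rewrite mulrAC Hu mulrC mulKf.
move=> [u [[s [Ss Hs]] ->]]; exists s; split=> // i.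
by exists (u * s`_i); split=> //; rewrite mulrA.
Qed.

End MultSubset.

Section Overring.
Variables (K : fieldType) (D : K -> Prop) (S : {poly K} -> Prop).
Hypotheses (hD : is_subring D) (hS : mult_subset D S).

Local Notation R := (circS S D).
Let hR : is_subring R := circS_subring hS hD.

Lemma subset_circS : subset D R.
Proof. exact: (circS_ge hS (subring0 hD)). Qed.

Lemma mult_subset_overR s : S s -> polyOverP R s.
Proof. by move=> Ss i; apply: subset_circS; exact: (mult_subset_over hS Ss i). Qed.

Lemma mult_subset_Nv s : S s -> Nv R s.
Proof.
move=> Ss; split; first exact: mult_subset_overR.
split; first by apply/eqP => s0; apply: (mult_subset_neq0 hS); rewrite -s0.
apply: (vop_span_eq hR); first by move=> y; apply: polyOverP_mem (mult_subset_overR Ss).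
move=> z Hz; rewrite mul1r; apply: (circS_idem hS (subring_submodule hD)).
by exists s; split=> // i; apply: Hz; exact: (span_nth hR).
Qed.

Lemma max_t_ideal_avoids M : max_t_ideal R M -> avoids S M.
Proof.
move=> [tM [nM1 _]] s Ss; exact: (t_ideal_Nv hR tM nM1 (mult_subset_Nv Ss)).
Qed.

Lemma circS_sub_wop (E : K -> Prop) : subset (circS S E) (wop R E).
Proof.
move=> x [s [Ss Hs]] M maxM.
have [i Msi] := not_polyOverP (max_t_ideal_avoids maxM Ss).
by exists s`_i; split; [exact: mult_subset_overR | split=> //; rewrite mulrC].
Qed.

Lemma t_linked_circS : t_linked D (circS S) R.
Proof.
move=> l lD hl eql.
have lR y : y \in l -> R y by move/lD; apply: subset_circS.
have [s [Ss Hs]] : circS S (span D l) 1.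
  by case: (eql 1) => _; apply; apply: subset_circS; exact: (subring1 hD).
have v1 : vop R (span R l) 1.
  move=> z Hz; rewrite mul1r; apply: (circS_idem hS (subring_submodule hD)).
  exists s; split=> // i; apply: Hz; move: (Hs i); rewrite mul1r.
  have spanD := submodule_restrict subset_circS (span_submodule hR l).
  by apply: span_min spanD _ => y yl; exact: (span_mem hR).
move=> x; split.
  move=> [L [LI [_ Hx]]]; apply: (vop_span_sub hR) Hx => y /LI.
  exact: span_min (subring_submodule hR) lR.
move=> Rx; exists l; split; first by move=> y yl; exact: (span_mem hR).
split=> //; rewrite -(mulr1 x).
by case: (vop_submodule hR (span R l)) => _ [_]; apply.
Qed.

Lemma circS_semistar : is_semistar R (circS S).
Proof.
have restrict E : nz_submodule R E -> submodule D E.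
  by case=> hE _; exact: submodule_restrict subset_circS hE.
have circS0 E : nz_submodule R E -> circS S E 0.
  by move=> /restrict [E0 _]; exact: (circS_ge hS E0).
split.
  move=> E nzE; split; first exact: (circS_submodule hS (restrict E nzE)).
  have [[E0 _] [e [Ee enz]]] := nzE.
  by exists e; split=> //; exact: (circS_ge hS E0).
split; first by move=> x E xnz _; exact: circS_scale.
split; first by move=> E F _ _; exact: circS_mono.
split; first by move=> E [[E0 _] _]; exact: (circS_ge hS E0).
move=> E nzE x; split; first exact: (circS_idem hS (restrict E nzE)).
exact: (circS_ge hS (circS0 E nzE)).
Qed.

Lemma circS_R : seteq (circS S R) R.
Proof.
move=> x; split; first exact: (circS_idem hS (subring_submodule hD)).
exact: (circS_ge hS (subring0 hR)).
Qed.

Lemma sharp_Nv g : sharp R S g -> Nv R g.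
Proof.
move=> [Rg avg].
have gnz : g != 0.
  apply/eqP => g0; apply: (avg _ (prime_ideal0 hR)); last by rewrite g0 => i; rewrite coef0.
  move=> s Ss s0; apply: (mult_subset_neq0 hS).
  by rewrite (_ : 0 = s) //; apply/polyP => i; rewrite coef0; exact/esym/s0.
split=> //; split=> //.
have gR y : y \in (g : seq K) -> R y by apply: polyOverP_mem.
apply: (vop_span_eq hR gR); apply: NNPP => ng1.
have iI : is_ideal R (span R g).
  by split; [exact: span_submodule | move=> x; exact: span_min (subring_submodule hR) gR].
have nzI : exists x0, span R g x0 /\ x0 != 0.
  by have [y yg ynz] := hasP (poly_has_nz gnz); exists y; split=> //; exact: (span_mem hR).
have ntg1 : ~ top R (span R g) 1.
  move=> [L [LI [_ H]]]; apply: ng1; move: H; apply: vop_mono => e.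
  exact: span_min (span_submodule hR g) LI.
have [M [maxM IM]] := max_t_ideal_exists hR (t_ideal_top hR iI nzI) ntg1.
apply: (avg M (max_t_ideal_prime hR maxM) (max_t_ideal_avoids maxM)) => i.
by apply: IM; apply: (top_ge hR nzI); exact: (span_nth hR).
Qed.

Lemma wop_sub_circS_Nv_sharp :
  (forall E, nz_submodule R E -> subset (wop R E) (circS S E)) ->
  forall g, Nv R g -> sharp R S g.
Proof.
move=> w_circ g Nvg; have [Rg [gnz _]] := Nvg; split=> // P pP avP Pg.
have iP := pP.1.
have [nzP|zP] := classic (exists x, P x /\ x != 0).
  have [s [Ss Hs]] : circS S P 1.
    apply: (w_circ P (conj iP.1 nzP)) => M [tM [nM1 _]].
    have [i Mgi] := not_polyOverP (t_ideal_Nv hR tM nM1 Nvg).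
    by exists g`_i; split=> //; split=> //; rewrite mulr1.
  by apply: (avP s Ss) => i; rewrite -[s`_i]mul1r.
apply: (negP gnz); apply/eqP/polyP => i; rewrite coef0; apply: NNPP => gi0; apply: zP.
by exists g`_i; split=> //; apply/eqP.
Qed.

Lemma Nv_sharp_prime_sub_max_t (P : K -> Prop) :
  (forall g, Nv R g -> sharp R S g) -> prime_ideal R P -> avoids S P ->
  (exists y, P y /\ y != 0) -> exists M, max_t_ideal R M /\ subset P M.
Proof.
move=> Nv_sharp pP avP nzP; have [iP _] := pP; have [[P0 _] PR] := iP.
have [[L [LP [hL H1]]]|ntP1] := classic (top R P 1); last first.
  have [M [maxM PtM]] := max_t_ideal_exists hR (t_ideal_top hR iP nzP) ntP1.
  by exists M; split=> // x Px; apply: PtM; exact: (top_ge hR nzP).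
have LR y : y \in L -> R y by move/LP; apply: PR.
have [_ avL] := Nv_sharp _ (Nv_Poly hR LR hL H1).
by case: (avL P pP avP) => i; rewrite coef_Poly; exact: pred_nth.
Qed.

Lemma Nv_sharp_wop_sub_circS : is_quotient_field D ->
  (forall g, Nv R g -> sharp R S g) ->
  forall E, nz_submodule R E -> subset (wop R E) (circS S E).
Proof.
move=> hQ Nv_sharp E nzE x wx.
have [s [Ss Js]] : exists s, S s /\ polyOverP (colon_elt R E x) s.
  apply: (avoids_ideal_content hR (mult_subset1 hS) (mult_subsetM hS)).
    exact: (colon_elt_ideal hR x nzE.1).
  move=> P pP avP JP; have [a [Ja anz]] := colon_elt_nz hR x hQ subset_circS nzE.
  have nzP : exists y, P y /\ y != 0 by exists a; split=> //; apply: JP.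
  have [M [maxM PM]] := Nv_sharp_prime_sub_max_t Nv_sharp pP avP nzP.
  have [r [Rr [Mr Erx]]] := wx M maxM.
  by apply: Mr; apply: PM; apply: JP; split.
by exists s; split=> // i; rewrite mulrC; case: (Js i).
Qed.

End Overring.

Unset Implicit Arguments.

Theorem theorem2p1 (K : fieldType) (D : K -> Prop) (S : {poly K} -> Prop) :
  is_subring D -> is_quotient_field D -> mult_subset D S ->
  let R := circS S D in
  t_linked D (circS S) R /\
  (forall g, S g -> Nv R g) /\
  (is_semistar R (circS S) /\ seteq (circS S R) R) /\
  ((forall E, nz_submodule R E -> seteq (circS S E) (wop R E)) <->
   (forall g, sharp R S g <-> Nv R g)).
Proof.
move=> hD hQ hS R.
split; first exact: t_linked_circS.
split; first by move=> g; exact: mult_subset_Nv.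
split; first by split; [exact: circS_semistar | exact: circS_R].
split=> [circ_eq_w g | sharp_eq_Nv E nzE x].
  split; first exact: sharp_Nv.
  by apply: wop_sub_circS_Nv_sharp => // E nzE x /(circ_eq_w E nzE x).2.
split; first exact: circS_sub_wop.
by apply: Nv_sharp_wop_sub_circS => // g /(sharp_eq_Nv g).2.
Qed.
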